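(* Fix $n\in\mathbb N$ and for $j\in\mathbb Z$ put $\kappa(j)=\cos\big(\tfrac{j\pi}{2(n+1)}\big)$ and $\lambda(j)=\sin\big(\tfrac{j\pi}{2(n+1)}\big)$. Let $a\in\mathbb Z$ and let $f,g,h\in\{\kappa,-\kappa,\lambda,-\lambda\}$. (1) If $m\in2\mathbb Z$ and $|m|\le 2n$, then $\sum_{j=0}^{2n+1}(-1)^j f(a+mj)=0$. (2) If $s,t\in\mathbb Z$ with $\max\{|s|,|t|\}\le n-1$ and $s\equiv t\pmod 2$, then \[\sum_{j=0}^{2n+1}(-1)^j f(a+2j)\,g(sj)\,h(tj)=0=\sum_{j=0}^{2n+1}(-1)^j g(sj)\,h(tj).\] *)

From Stdlib Require Import Reals ZArith.
Open Scope R_scope.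

Definition kappa (n : nat) (j : Z) : R := cos (IZR j * PI / (2 * (INR n + 1))).
Definition lambda (n : nat) (j : Z) : R := sin (IZR j * PI / (2 * (INR n + 1))).

Definition admissible (n : nat) (f : Z -> R) : Prop :=
  f = kappa n \/ f = (fun j => - kappa n j) \/
  f = lambda n \/ f = (fun j => - lambda n j).

(* Every admissible function is [k |-> sigma * cos (c + k * theta)] with
   [theta = pi / (2(n+1))] and [sigma = +-1], so by the product-to-sum formulas both
   parts reduce to alternating sums [sum_(j=0)^(2n+1) (-1)^j cos (c + j m theta)] with
   [m] even and [|m| <= 2n]; for (2) the frequencies are [2 +- s +- t] and [s +- t].
   Writing [(-1)^j] as [cos (j pi)] such a sum becomes a sum of cosines along an
   arithmetic progression of step [p = m theta + pi] over [2(n+1)] terms, which is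
   zero because [2(n+1) p] is a multiple of [2 pi] while [p / 2] lies in [(0, pi)]. *)

From Stdlib Require Import Reals ZArith Lra Lia.
Open Scope R_scope.

Definition theta (n : nat) : R := PI / (2 * (INR n + 1)).

Lemma sin_add_sub (x h : R) : sin (x + h) - sin (x - h) = 2 * cos x * sin h.
Proof. rewrite sin_plus, sin_minus. ring. Qed.

Lemma cos_add_INR_PI (x : R) (j : nat) : cos (x + INR j * PI) = (-1) ^ j * cos x.
Proof.
  induction j as [|j IH].
  - simpl. replace (x + 0 * PI) with x by ring. ring.
  - rewrite S_INR. replace (x + (INR j + 1) * PI) with ((x + INR j * PI) + PI) by ring.
    rewrite neg_cos, IH. simpl. ring.
Qed.

Lemma sum_cos_arith_mul_sin (c p : R) (K : nat) :
  2 * sin (p / 2) * sum_f_R0 (fun j => cos (c + INR j * p)) K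
  = sin (c + (INR K + / 2) * p) - sin (c - p / 2).
Proof.
  induction K as [|K IH].
  - simpl. replace (c + 0 * p) with c by ring.
    replace (c + (0 + / 2) * p) with (c + p / 2) by field.
    rewrite sin_add_sub. ring.
  - rewrite tech5, Rmult_plus_distr_l, IH, S_INR.
    replace (2 * sin (p / 2) * cos (c + (INR K + 1) * p))
      with (sin (c + (INR K + 1) * p + p / 2) - sin (c + (INR K + 1) * p - p / 2))
      by (rewrite sin_add_sub; ring).
    replace (c + (INR K + 1) * p - p / 2) with (c + (INR K + / 2) * p) by field.
    replace (c + (INR K + 1) * p + p / 2) with (c + (INR K + 1 + / 2) * p) by field.
    ring.
Qed.

Lemma sum_cos_arith_full_period (c p : R) (K k : nat) :
  sin (p / 2) <> 0 -> INR (S K) * p = 2 * INR k * PI ->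
  sum_f_R0 (fun j => cos (c + INR j * p)) K = 0.
Proof.
  intros Hsin Hperiod.
  pose proof (sum_cos_arith_mul_sin c p K) as T.
  replace (c + (INR K + / 2) * p) with ((c - p / 2) + 2 * INR k * PI) in T
    by (rewrite <- Hperiod, S_INR; field).
  rewrite sin_period, Rminus_diag in T.
  apply Rmult_integral in T as [T|T]; [lra|exact T].
Qed.

Lemma alt_sum_cos_arith (c q : R) (K : nat) :
  sum_f_R0 (fun j => (-1) ^ j * cos (c + INR j * q)) K
  = sum_f_R0 (fun j => cos (c + INR j * (q + PI))) K.
Proof.
  apply sum_eq; intros j _.
  rewrite <- cos_add_INR_PI. f_equal. ring.
Qed.

Lemma alt_sum_cos_eq0 (n : nat) (m : Z) (A c : R) (F : nat -> R) :
  Z.Even m -> (Z.abs m <= 2 * Z.of_nat n)%Z ->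
  (forall j, F j = c + INR j * (IZR m * theta n)) ->
  sum_f_R0 (fun j => (-1) ^ j * (A * cos (F j))) (2 * n + 1) = 0.
Proof.
  intros [q Hq] Hm HF.
  rewrite (sum_eq _ (fun j => (-1) ^ j * cos (c + INR j * (IZR m * theta n)) * A))
    by (intros j _; rewrite HF; ring).
  rewrite <- scal_sum, alt_sum_cos_arith.
  apply Rmult_eq_0_compat_l.
  assert (Hn : IZR (Z.of_nat n) = INR n) by (rewrite INR_IZR_INZ; reflexivity).
  assert (Hm_bounds : - (2 * INR n) <= IZR m <= 2 * INR n).
  { rewrite <- Hn, <- mult_IZR, <- opp_IZR. split; apply IZR_le; lia. }
  assert (HD : 0 < INR n + 1) by (pose proof (pos_INR n); lra).
  apply (sum_cos_arith_full_period _ _ _ (Z.to_nat (q + Z.of_nat n + 1))).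
  - assert (Htheta : theta n * (2 * (INR n + 1)) = PI)
      by (unfold theta; field; lra).
    assert (Htheta_pos : 0 < theta n)
      by (unfold theta; apply Rdiv_lt_0_compat; [exact PI_RGT_0 | lra]).
    apply Rgt_not_eq, sin_gt_0; nra.
  - rewrite (INR_IZR_INZ (Z.to_nat _)), Z2Nat.id by lia.
    rewrite Hq, !plus_IZR, mult_IZR, Hn, S_INR, plus_INR, mult_INR.
    unfold theta. simpl. field. lra.
Qed.

Lemma cos_mul_cos (x y : R) : cos x * cos y = (cos (x + y) + cos (x - y)) / 2.
Proof. rewrite cos_plus, cos_minus. field. Qed.

Lemma alt_sum_cos2_eq0 (n : nat) (s t : Z) (A B c d : R) (F G : nat -> R) :
  Z.Even (s + t) -> (Z.abs s + Z.abs t <= 2 * Z.of_nat n)%Z ->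
  (forall j, F j = c + INR j * (IZR s * theta n)) ->
  (forall j, G j = d + INR j * (IZR t * theta n)) ->
  sum_f_R0 (fun j => (-1) ^ j * (A * cos (F j)) * (B * cos (G j))) (2 * n + 1) = 0.
Proof.
  intros Hadd Hst HF HG.
  assert (Hsub : Z.Even (s - t)) by (destruct Hadd as [q Hq]; exists (q - t)%Z; lia).
  set (AB := A * B / 2).
  rewrite (sum_eq _ (fun j => (-1) ^ j * (AB * cos (F j + G j))
                              + (-1) ^ j * (AB * cos (F j - G j))))
    by (intros j _; transitivity (A * B * ((-1) ^ j * (cos (F j) * cos (G j))));
        [ring | rewrite cos_mul_cos; unfold AB; field]).
  rewrite sum_plus, (alt_sum_cos_eq0 n (s + t) AB (c + d)),
    (alt_sum_cos_eq0 n (s - t) AB (c - d)) by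
    first [ assumption | lia | intro j; rewrite HF, HG, ?plus_IZR, ?minus_IZR; ring ].
  ring.
Qed.

Lemma cos_mul_cos_mul_cos (x y z : R) :
  cos x * cos y * cos z
  = (cos (x + y + z) + cos (x + y - z) + cos (x - y + z) + cos (x - y - z)) / 4.
Proof.
  rewrite ?cos_plus, ?sin_plus, ?cos_minus, ?sin_minus,
          ?cos_plus, ?sin_plus, ?cos_minus, ?sin_minus.
  field.
Qed.

Lemma alt_sum_cos3_eq0 (n : nat) (r s t : Z) (A B C b c d : R) (F G H : nat -> R) :
  Z.Even (r + s + t) -> (Z.abs r + Z.abs s + Z.abs t <= 2 * Z.of_nat n)%Z ->
  (forall j, F j = b + INR j * (IZR r * theta n)) ->
  (forall j, G j = c + INR j * (IZR s * theta n)) ->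
  (forall j, H j = d + INR j * (IZR t * theta n)) ->
  sum_f_R0 (fun j => (-1) ^ j * (A * cos (F j)) * (B * cos (G j)) * (C * cos (H j)))
    (2 * n + 1) = 0.
Proof.
  intros Hpar Hrst HF HG HH.
  assert (Hpar' : Z.Even (r + s - t) /\ Z.Even (r - s + t) /\ Z.Even (r - s - t)).
  { destruct Hpar as [q Hq].
    split; [|split]; [exists (q - t)%Z | exists (q - s)%Z | exists (q - s - t)%Z]; lia. }
  destruct Hpar' as (Hpar1 & Hpar2 & Hpar3).
  set (ABC := A * B * C / 4).
  rewrite (sum_eq _ (fun j => (-1) ^ j * (ABC * cos (F j + G j + H j))
                              + (-1) ^ j * (ABC * cos (F j + G j - H j))
                              + (-1) ^ j * (ABC * cos (F j - G j + H j))
                              + (-1) ^ j * (ABC * cos (F j - G j - H j))))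
    by (intros j _;
        transitivity (A * B * C * ((-1) ^ j * (cos (F j) * cos (G j) * cos (H j))));
        [ring | rewrite cos_mul_cos_mul_cos; unfold ABC; field]).
  rewrite !sum_plus, (alt_sum_cos_eq0 n (r + s + t) ABC (b + c + d)),
    (alt_sum_cos_eq0 n (r + s - t) ABC (b + c - d)),
    (alt_sum_cos_eq0 n (r - s + t) ABC (b - c + d)),
    (alt_sum_cos_eq0 n (r - s - t) ABC (b - c - d)) by
    first [ assumption | lia
          | intro j; rewrite HF, HG, HH; repeat (rewrite plus_IZR || rewrite minus_IZR);
            ring ].
  ring.
Qed.

Lemma sin_as_cos (x : R) : sin x = cos (- (PI / 2) + x).
Proof. rewrite <- cos_shift, <- cos_neg. f_equal. ring. Qed.

Lemma admissible_cos (n : nat) (f : Z -> R) : admissible n f ->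
  exists sigma c, forall k, f k = sigma * cos (c + IZR k * theta n).
Proof.
  assert (Hk : forall k, IZR k * PI / (2 * (INR n + 1)) = IZR k * theta n)
    by (intro k; unfold theta, Rdiv; ring).
  unfold admissible, kappa, lambda.
  intros [ -> | [ -> | [ -> | -> ]]];
    [exists 1, 0 | exists (-1), 0 | exists 1, (- (PI / 2)) | exists (-1), (- (PI / 2))];
    intro k; rewrite Hk, ?sin_as_cos, ?Rplus_0_l; ring.
Qed.

Theorem lemma4p10 (n : nat) (a : Z) (f g h : Z -> R)
  (Hf : admissible n f) (Hg : admissible n g) (Hh : admissible n h) :
  (forall m : Z, Z.Even m -> (Z.abs m <= 2 * Z.of_nat n)%Z ->
     sum_f_R0 (fun j => (-1) ^ j * f (a + m * Z.of_nat j)%Z) (2 * n + 1) = 0)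
  /\
  (forall s t : Z, (Z.max (Z.abs s) (Z.abs t) <= Z.of_nat n - 1)%Z ->
     Z.Even (s - t) ->
     sum_f_R0 (fun j => (-1) ^ j * f (a + 2 * Z.of_nat j)%Z
                         * g (s * Z.of_nat j)%Z * h (t * Z.of_nat j)%Z) (2 * n + 1) = 0
     /\
     sum_f_R0 (fun j => (-1) ^ j * g (s * Z.of_nat j)%Z * h (t * Z.of_nat j)%Z)
       (2 * n + 1) = 0).
Proof.
  destruct (admissible_cos n f Hf) as (sf & cf & Ef).
  destruct (admissible_cos n g Hg) as (sg & cg & Eg).
  destruct (admissible_cos n h Hh) as (sh & ch & Eh).
  assert (Hphase : forall (c : R) (b m : Z) (j : nat),
    c + IZR (b + m * Z.of_nat j) * theta n = (c + IZR b * theta n) + INR j * (IZR m * theta n)).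
  { intros c b m j. rewrite plus_IZR, mult_IZR, <- INR_IZR_INZ. ring. }
  assert (Hlin : forall (c : R) (m : Z) (j : nat),
    c + IZR (m * Z.of_nat j) * theta n = c + INR j * (IZR m * theta n)).
  { intros c m j. rewrite mult_IZR, <- INR_IZR_INZ. ring. }
  split.
  - intros m Hm Hmn.
    erewrite sum_eq by (intros j _; rewrite Ef; reflexivity).
    exact (alt_sum_cos_eq0 n m sf _ _ Hm Hmn (fun j => Hphase cf a m j)).
  - intros s t Hst [q Hq]. split.
    + erewrite sum_eq by (intros j _; rewrite Ef, Eg, Eh; reflexivity).
      refine (alt_sum_cos3_eq0 n 2 s t sf sg sh _ cg ch _ _ _ _ _
                (fun j => Hphase cf a 2%Z j) (fun j => Hlin cg s j) (fun j => Hlin ch t j));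
        [exists (1 + q + t)%Z | ]; lia.
    + erewrite sum_eq by (intros j _; rewrite Eg, Eh; reflexivity).
      refine (alt_sum_cos2_eq0 n s t sg sh cg ch _ _ _ _
                (fun j => Hlin cg s j) (fun j => Hlin ch t j));
        [exists (q + t)%Z | ]; lia.
Qed.
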